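(* Assume $a>1$. Let $f:\mathbb R\to\mathbb R$ be defined by $f(z)=\mu z+\lambda\ln\Big[\dfrac{\lambda(e^{\frac{a}{\lambda}(1-z)}-1)}{1-z}\Big]$ for $z\neq1$ and $f(1)=\mu+\lambda\ln a$. Then: (1) $f(z)=\mu z+\lambda\ln w(z)$ for all $z\in\mathbb R$, where $w(z)=a+\sum_{n=2}^\infty \frac{a^n(1-z)^{n-1}}{n!\,\lambda^{n-1}}$; in particular $f\in C^\infty(\mathbb R)$. (2) $f$ is convex, and the graph of $f$ intersects the graph of $k(x)=\mu x$ at exactly one point, whose abscissa $H$ satisfies $H\in(1,1+\lambda)$.
   Context: Constants $\mu\in\mathbb R$, $a>0$, $\lambda>0$ are fixed. *)

From Stdlib Require Export Reals Lra.
From Coquelicot Require Export Coquelicot.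
Open Scope R_scope.

Definition fdef (mu a lam : R) (z : R) : R :=
  if Req_EM_T z 1 then mu + lam * ln a
  else mu * z + lam * ln (lam * (exp (a / lam * (1 - z)) - 1) / (1 - z)).

(* k-th term (k >= 0) of the series sum_{n>=2} a^n (1-z)^(n-1) / (n! lam^(n-1)),
   reindexed with n = k + 2. *)
Definition wterm (a lam z : R) (k : nat) : R :=
  a ^ (k + 2) * (1 - z) ^ (k + 1) / (INR (Factorial.fact (k + 2)) * lam ^ (k + 1)).

Definition w (a lam z : R) : R := a + Series (wterm a lam z).

Definition convex_fun (f : R -> R) : Prop :=
  forall x y t, 0 <= t <= 1 ->
    f (t * x + (1 - t) * y) <= t * f x + (1 - t) * f y.

From Stdlib Require Import Reals Lra Lia FunctionalExtensionality.
From Coquelicot Require Import Coquelicot.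
Open Scope R_scope.

(* Let P be the entire power series P(v) = sum_n v^n/(n+1)!, so
   that P(0) = 1 and P(v) = (e^v - 1)/v for v <> 0.  The series w of the
   statement is a reindexing of a P(a(1-z)/lam), and on both branches of its
   definition f(z) = mu z + lam ln a + lam ln P(a(1-z)/lam).  Hence:
   - part (1) is the identity w = a P(a(1-z)/lam);
   - smoothness follows from closure of "n times differentiable everywhere"
     under sums, products, composition, inverses and ln, since P is entire;
   - convexity of f reduces to convexity of ln P, i.e. P'^2 <= P'' P, which in
     closed form is (e^v - 1)^2 >= v^2 e^v, i.e. |2 sinh(v/2)| >= |v|;
   - f(x) = mu x iff a P(a(1-x)/lam) = 1; P is strictly increasing with
     P(-a) < 1/a < P(0), so the intermediate value theorem gives a unique
     root v in (-a, 0), and H = 1 - lam v / a lies in (1, 1 + lam). *)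

Definition P_coef (n : nat) : R := / INR (Factorial.fact (S n)).

Definition P : R -> R := PSeries P_coef.

Lemma INR_fact_pos n : 0 < INR (Factorial.fact n).
Proof. apply lt_0_INR, Factorial.lt_O_fact. Qed.

(* P is entire, by d'Alembert's ratio test: the ratio of coefficients is 1/(n+2). *)
Lemma P_radius : CV_radius P_coef = p_infty.
Proof.
  apply CV_radius_infinite_DAlembert.
  - intro n; apply Rinv_neq_0_compat, Rgt_not_eq, INR_fact_pos.
  - apply is_lim_seq_ext with (fun n => / INR (S (S n))).
    + intro n; unfold P_coef.
      change (Factorial.fact (S (S n))) with (S (S n) * Factorial.fact (S n))%nat.
      rewrite mult_INR.
      assert (hf := INR_fact_pos (S n)).
      assert (hn : 0 < INR (S (S n))) by (apply lt_0_INR; lia).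
      replace (/ (INR (S (S n)) * INR (Factorial.fact (S n))) / / INR (Factorial.fact (S n)))
        with (/ INR (S (S n))) by (field; lra).
      symmetry; apply Rabs_pos_eq, Rlt_le, Rinv_0_lt_compat; lra.
    + replace (Finite 0) with (Rbar_inv p_infty) by reflexivity.
      apply is_lim_seq_inv; [| discriminate].
      apply (is_lim_seq_incr_1 (fun n => INR (S n))).
      apply (is_lim_seq_incr_1 INR), is_lim_seq_INR.
Qed.

Lemma P_series v : is_series (fun n => P_coef n * v ^ n) (P v).
Proof.
  apply is_pseries_R, PSeries_correct, CV_radius_inside.
  rewrite P_radius; exact I.
Qed.

Lemma P_coef_0 : P_coef 0 = 1.
Proof. unfold P_coef; simpl; apply Rinv_1. Qed.

Lemma P_0 : P 0 = 1.
Proof. unfold P; rewrite PSeries_0; apply P_coef_0. Qed.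

(* Dropping the constant term of the exponential series and dividing by v. *)
Lemma P_closed_form v : v <> 0 -> P v = (exp v - 1) / v.
Proof.
  intro hv.
  rewrite <- (is_series_unique _ _ (P_series v)). apply is_series_unique.
  pose proof (proj1 (is_pseries_R _ _ _) (is_exp_Reals v)) as hexp.
  assert (htail : is_series (fun k => / INR (Factorial.fact (S k)) * v ^ S k) (exp v - 1)).
  { apply (is_series_incr_1 (fun n => / INR (Factorial.fact n) * v ^ n)).
    replace (plus (exp v - 1) _) with (exp v); [exact hexp|].
    unfold plus; simpl; rewrite Rinv_1; ring. }
  apply (is_series_scal_l (/ v)) in htail.
  replace ((exp v - 1) / v) with (scal (/ v) (exp v - 1))
    by (unfold scal; simpl; unfold mult; simpl; field; exact hv).
  eapply is_series_ext; [| exact htail].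
  intro n; unfold scal; simpl; unfold mult; simpl; unfold P_coef.
  change (Factorial.fact n + n * Factorial.fact n)%nat with (Factorial.fact (S n)).
  pose proof (INR_fact_pos (S n)) as hf. field; lra.
Qed.

(* P > 0: e^v - 1 and v have the same sign; positivity is needed to take ln P. *)
Lemma P_pos v : 0 < P v.
Proof.
  destruct (Req_dec v 0) as [->|hv]; [rewrite P_0; lra|].
  rewrite P_closed_form by exact hv.
  pose proof (exp_ineq1 v hv) as hexp.
  destruct (Rlt_or_le 0 v).
  - apply Rdiv_lt_0_compat; lra.
  - assert (hlt : exp v < exp 0) by (apply exp_increasing; lra).
    rewrite exp_0 in hlt.
    replace ((exp v - 1) / v) with ((1 - exp v) / - v) by (field; exact hv).
    apply Rdiv_lt_0_compat; lra.
Qed.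

Lemma wterm_is_series a lam z : 0 < lam ->
  is_series (wterm a lam z) (a * (P (a / lam * (1 - z)) - 1)).
Proof.
  intro hlam. set (v := a / lam * (1 - z)).
  assert (htail : is_series (fun k => P_coef (S k) * v ^ S k) (P v - 1)).
  { apply (is_series_incr_1 (fun n => P_coef n * v ^ n)).
    replace (plus (P v - 1) _) with (P v); [apply P_series|].
    unfold plus; simpl; rewrite P_coef_0; ring. }
  apply (is_series_scal_l a) in htail.
  eapply is_series_ext; [| exact htail].
  intro k; unfold scal; simpl; unfold mult; simpl; unfold wterm, P_coef, v.
  replace (k + 2)%nat with (S (S k)) by lia.
  replace (k + 1)%nat with (S k) by lia.
  pose proof (INR_fact_pos (S (S k))) as hf.
  assert (0 < lam ^ k) by (apply pow_lt; lra).
  unfold Rdiv; rewrite !Rpow_mult_distr, pow_inv; simpl pow.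
  field; repeat split; lra.
Qed.

Lemma w_eq_P a lam z : 0 < lam ->
  ex_series (wterm a lam z) /\ w a lam z = a * P (a / lam * (1 - z)).
Proof.
  intro hlam. pose proof (wterm_is_series a lam z hlam) as hs. split.
  - eexists; exact hs.
  - unfold w; rewrite (is_series_unique _ _ hs); ring.
Qed.

Lemma fdef_eq_P mu a lam z : 0 < a -> 0 < lam ->
  fdef mu a lam z = mu * z + lam * ln (a * P (a / lam * (1 - z))).
Proof.
  intros ha hlam. unfold fdef. destruct (Req_EM_T z 1) as [->|hz].
  - rewrite Rminus_diag, Rmult_0_r, P_0, Rmult_1_r, Rmult_1_r; reflexivity.
  - assert (hv : a / lam * (1 - z) <> 0).
    { apply Rmult_integral_contrapositive; split.
      - apply Rgt_not_eq, Rdiv_lt_0_compat; lra.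
      - intro; apply hz; lra. }
    rewrite (P_closed_form _ hv). do 3 f_equal.
    field; split; [intro; apply hz; lra | lra].
Qed.

(* Smoothness: closure of "n times differentiable on R" *)

Fixpoint derivable_n (n : nat) (f : R -> R) : Prop :=
  match n with
  | O => True
  | S n => (forall x, ex_derive f x) /\ derivable_n n (Derive f)
  end.

Lemma derivable_n_pred n : forall f, derivable_n (S n) f -> derivable_n n f.
Proof.
  induction n as [|n IH]; intros f hf; [exact I|].
  destruct hf as [hd hn]; split; [exact hd | exact (IH _ hn)].
Qed.

Lemma derivable_n_ex_derive n :
  forall f, derivable_n (S n) f -> forall x, ex_derive (Derive_n f n) x.
Proof.
  induction n as [|n IH]; intros f [hd hn] x; [exact (hd x)|].
  assert (hcomm : Derive_n f (S n) = Derive_n (Derive f) n).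
  { apply functional_extensionality; intro y.
    replace (S n) with (n + 1)%nat by lia.
    rewrite <- (Derive_n_comp f n 1); reflexivity. }
  rewrite hcomm; exact (IH _ hn x).
Qed.

Lemma derivable_n_ex_derive_n n f : derivable_n n f -> forall x, ex_derive_n f n x.
Proof.
  destruct n; intros hf x; [exact I|]. exact (derivable_n_ex_derive n f hf x).
Qed.

Lemma derivable_n_S_intro n f g :
  (forall x, ex_derive f x) -> (forall x, Derive f x = g x) -> derivable_n n g ->
  derivable_n (S n) f.
Proof.
  intros hd he hg; split; [exact hd|].
  replace (Derive f) with g; [exact hg|].
  apply functional_extensionality; intro x; symmetry; apply he.
Qed.

Lemma derivable_n_const n : forall k, derivable_n n (fun _ => k).
Proof.
  induction n as [|n IH]; intro k; [exact I|].
  apply derivable_n_S_intro with (fun _ => 0); [intro; apply ex_derive_const | | apply IH].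
  intro; apply Derive_const.
Qed.

Lemma derivable_n_id n : derivable_n n (fun x => x).
Proof.
  destruct n; [exact I|].
  apply derivable_n_S_intro with (fun _ => 1);
    [intro; apply ex_derive_id | intro; apply Derive_id | apply derivable_n_const].
Qed.

Lemma derivable_n_plus n : forall f g,
  derivable_n n f -> derivable_n n g -> derivable_n n (fun x => f x + g x).
Proof.
  induction n as [|n IH]; intros f g hf hg; [exact I|].
  destruct hf as [hf hf']; destruct hg as [hg hg'].
  apply derivable_n_S_intro with (fun x => Derive f x + Derive g x).
  - intro; apply (ex_derive_plus f g); auto.
  - intro; apply Derive_plus; auto.
  - apply IH; auto.
Qed.

Lemma derivable_n_mult n : forall f g,
  derivable_n n f -> derivable_n n g -> derivable_n n (fun x => f x * g x).
Proof.
  induction n as [|n IH]; intros f g hf hg; [exact I|].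
  pose proof (derivable_n_pred _ _ hf) as hf0; pose proof (derivable_n_pred _ _ hg) as hg0.
  destruct hf as [hf hf']; destruct hg as [hg hg'].
  apply derivable_n_S_intro with (fun x => Derive f x * g x + f x * Derive g x).
  - intro; apply ex_derive_mult; auto.
  - intro; apply Derive_mult; auto.
  - apply derivable_n_plus; apply IH; auto.
Qed.

Lemma derivable_n_comp n : forall f g,
  derivable_n n f -> derivable_n n g -> derivable_n n (fun x => f (g x)).
Proof.
  induction n as [|n IH]; intros f g hf hg; [exact I|].
  pose proof (derivable_n_pred _ _ hf) as hf0; pose proof (derivable_n_pred _ _ hg) as hg0.
  destruct hf as [hf hf']; destruct hg as [hg hg'].
  apply derivable_n_S_intro with (fun x => Derive g x * Derive f (g x)).
  - intro; apply ex_derive_comp; auto.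
  - intro x; apply (Derive_comp f g x); auto.
  - apply (derivable_n_mult n (Derive g) (fun x => Derive f (g x))); auto.
Qed.

Lemma derivable_n_inv n : forall g, (forall x, g x <> 0) ->
  derivable_n n g -> derivable_n n (fun x => / g x).
Proof.
  induction n as [|n IH]; intros g hg0 hg; [exact I|].
  pose proof (derivable_n_pred _ _ hg) as hgn. destruct hg as [hg hg'].
  apply derivable_n_S_intro with (fun x => (-1 * Derive g x) * (/ g x * / g x)).
  - intro; apply ex_derive_inv; auto.
  - intro x; rewrite Derive_inv by auto. field; auto.
  - apply (derivable_n_mult n (fun x => -1 * Derive g x)).
    + apply (derivable_n_mult n (fun _ => -1)); [apply derivable_n_const | exact hg'].
    + apply (derivable_n_mult n (fun x => / g x)); auto.
Qed.

Lemma derivable_n_ln n : forall g, (forall x, 0 < g x) ->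
  derivable_n n g -> derivable_n n (fun x => ln (g x)).
Proof.
  destruct n as [|n]; intros g hg0 hg; [exact I|].
  pose proof (derivable_n_pred _ _ hg) as hgn. destruct hg as [hg hg'].
  assert (hder : forall x, is_derive (fun x => ln (g x)) x (Derive g x * / g x)).
  { intro x; apply (is_derive_comp ln g x);
      [apply is_derive_ln, hg0 | apply Derive_correct, hg]. }
  apply derivable_n_S_intro with (fun x => Derive g x * / g x).
  - intro x; eexists; apply hder.
  - intro x; apply is_derive_unique, hder.
  - apply (derivable_n_mult n (Derive g)); [exact hg'|].
    apply derivable_n_inv; [intro x; specialize (hg0 x); lra | exact hgn].
Qed.

Lemma derivable_n_PSeries n : forall b, CV_radius b = p_infty -> derivable_n n (PSeries b).
Proof.
  induction n as [|n IH]; intros b hb; [exact I|].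
  apply derivable_n_S_intro with (PSeries (PS_derive b)).
  - intro x; apply ex_derive_PSeries; rewrite hb; exact I.
  - intro x; apply Derive_PSeries; rewrite hb; exact I.
  - apply IH; rewrite CV_radius_derive; exact hb.
Qed.

(* Monotonicity and convexity from the sign of the derivative *)

Lemma mvt_derive (f f' : R -> R) x y : x <= y -> (forall t, is_derive f t (f' t)) ->
  exists c, x <= c <= y /\ f y - f x = f' c * (y - x).
Proof.
  intros hxy hd.
  destruct (MVT_gen f x y f') as [c [hc e]].
  - intros; apply hd.
  - intros t _; apply continuity_pt_filterlim.
    apply (ex_derive_continuous (K := R_AbsRing) (V := R_NormedModule) f t).
    eexists; apply hd.
  - rewrite Rmin_left, Rmax_right in hc by lra. exists c; auto.
Qed.

Lemma nondecreasing_of_derive (f f' : R -> R) :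
  (forall t, is_derive f t (f' t)) -> (forall t, 0 <= f' t) ->
  forall x y, x <= y -> f x <= f y.
Proof.
  intros hd hp x y hxy. destruct (mvt_derive f f' x y hxy hd) as [c [_ e]].
  assert (0 <= f' c * (y - x)) by (apply Rmult_le_pos; auto; lra). lra.
Qed.

Lemma increasing_of_derive (f f' : R -> R) :
  (forall t, is_derive f t (f' t)) -> (forall t, 0 < f' t) ->
  forall x y, x < y -> f x < f y.
Proof.
  intros hd hp x y hxy. destruct (mvt_derive f f' x y (Rlt_le _ _ hxy) hd) as [c [_ e]].
  assert (0 < f' c * (y - x)) by (apply Rmult_lt_0_compat; auto; lra). lra.
Qed.

(* Convexity inequality for x <= y: the slopes of f on [x,p] and [p,y] are
   derivative values at points c1 <= c2. *)
Lemma convex_ineq_ordered (f f' : R -> R) : (forall t, is_derive f t (f' t)) ->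
  (forall x y, x <= y -> f' x <= f' y) ->
  forall x y t, x <= y -> 0 <= t <= 1 ->
    f (t * x + (1 - t) * y) <= t * f x + (1 - t) * f y.
Proof.
  intros hd hm x y t hxy ht. set (p := t * x + (1 - t) * y).
  destruct (mvt_derive f f' x p ltac:(unfold p; nra) hd) as [c1 [hc1 e1]].
  destruct (mvt_derive f f' p y ltac:(unfold p; nra) hd) as [c2 [hc2 e2]].
  assert (hslope : f' c1 <= f' c2) by (apply hm; lra).
  replace (p - x) with ((1 - t) * (y - x)) in e1 by (unfold p; ring).
  replace (y - p) with (t * (y - x)) in e2 by (unfold p; ring).
  assert (hw : 0 <= t * (1 - t) * (y - x)) by (apply Rmult_le_pos; nra).
  assert (t * (f p - f x) <= (1 - t) * (f y - f p)).
  { rewrite e1, e2.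
    replace (t * (f' c1 * ((1 - t) * (y - x)))) with (f' c1 * (t * (1 - t) * (y - x))) by ring.
    replace ((1 - t) * (f' c2 * (t * (y - x)))) with (f' c2 * (t * (1 - t) * (y - x))) by ring.
    apply Rmult_le_compat_r; assumption. }
  nra.
Qed.

Lemma convex_of_nondecreasing_derive (f f' : R -> R) :
  (forall t, is_derive f t (f' t)) -> (forall x y, x <= y -> f' x <= f' y) ->
  convex_fun f.
Proof.
  intros hd hm x y t ht. destruct (Rle_or_lt x y).
  - apply (convex_ineq_ordered f f'); auto.
  - replace (t * x + (1 - t) * y) with ((1 - t) * y + (1 - (1 - t)) * x) by ring.
    replace (t * f x + (1 - t) * f y) with ((1 - t) * f y + (1 - (1 - t)) * f x) by ring.
    apply (convex_ineq_ordered f f'); auto; lra.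
Qed.

Definition P1 : R -> R := Derive P.
Definition P2 : R -> R := Derive P1.

Lemma P1_PSeries : P1 = PSeries (PS_derive P_coef).
Proof.
  apply functional_extensionality; intro x.
  apply Derive_PSeries; rewrite P_radius; exact I.
Qed.

Lemma P2_PSeries : P2 = PSeries (PS_derive (PS_derive P_coef)).
Proof.
  unfold P2; rewrite P1_PSeries.
  apply functional_extensionality; intro x.
  apply Derive_PSeries; rewrite CV_radius_derive, P_radius; exact I.
Qed.

Lemma P_is_derive v : is_derive P v (P1 v).
Proof. apply Derive_correct, ex_derive_PSeries; rewrite P_radius; exact I. Qed.

Lemma P1_is_derive v : is_derive P1 v (P2 v).
Proof.
  apply Derive_correct; rewrite P1_PSeries.
  apply ex_derive_PSeries; rewrite CV_radius_derive, P_radius; exact I.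
Qed.

Lemma P1_0 : P1 0 = 1 / 2.
Proof. rewrite P1_PSeries, PSeries_0; unfold PS_derive, P_coef; simpl; field. Qed.

Lemma P2_0 : P2 0 = 1 / 3.
Proof. rewrite P2_PSeries, PSeries_0; unfold PS_derive, P_coef; simpl; field. Qed.

(* Away from 0, the derivatives of P are those of its closed form. *)
Definition Pc1 (v : R) : R := (v * exp v - exp v + 1) / v ^ 2.
Definition Pc2 (v : R) : R := (v ^ 2 * exp v - 2 * v * exp v + 2 * exp v - 2) / v ^ 3.

(* Nonzero points have a neighbourhood avoiding 0, where P is its closed form. *)
Lemma near_nonzero v : v <> 0 -> locally v (fun t => t <> 0).
Proof.
  intro hv. exists (mkposreal _ (Rabs_pos_lt v hv)); intros t ht ->.
  change (Rabs (0 - v) < Rabs v) in ht.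
  rewrite Rminus_0_l, Rabs_Ropp in ht; lra.
Qed.

Lemma P1_closed_form v : v <> 0 -> P1 v = Pc1 v.
Proof.
  intro hv. unfold P1.
  rewrite (Derive_ext_loc P (fun t => (exp t - 1) / t)).
  - apply is_derive_unique; unfold Pc1; auto_derive; [auto | field; auto].
  - eapply filter_imp; [intros t ht; apply P_closed_form, ht | apply near_nonzero, hv].
Qed.

Lemma P2_closed_form v : v <> 0 -> P2 v = Pc2 v.
Proof.
  intro hv. unfold P2. rewrite (Derive_ext_loc P1 Pc1).
  - apply is_derive_unique; unfold Pc1, Pc2; auto_derive; [auto | field; auto].
  - eapply filter_imp; [intros t ht; apply P1_closed_form, ht | apply near_nonzero, hv].
Qed.

Lemma exp_mul_exp_opp v : exp v * exp (- v) = 1.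
Proof. rewrite <- exp_plus, Rplus_opp_r; apply exp_0. Qed.

(* P is strictly increasing: for v <> 0, v^2 P'(v) = e^v (v - 1 + e^{-v}) > 0. *)
Lemma P1_pos v : 0 < P1 v.
Proof.
  destruct (Req_dec v 0) as [->|hv]; [rewrite P1_0; lra|].
  rewrite P1_closed_form by exact hv; unfold Pc1.
  pose proof (exp_ineq1 (- v) ltac:(lra)) as hineq.
  pose proof (exp_mul_exp_opp v) as hinv; pose proof (exp_pos v) as hpos.
  assert (0 < v ^ 2) by (apply pow2_gt_0; exact hv).
  apply Rdiv_lt_0_compat; nra.
Qed.

Lemma P_injective x y : P x = P y -> x = y.
Proof.
  intro e. destruct (Rtotal_order x y) as [h|[h|h]]; auto.
  - pose proof (increasing_of_derive P P1 P_is_derive P1_pos x y h); lra.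
  - pose proof (increasing_of_derive P P1 P_is_derive P1_pos y x h); lra.
Qed.

(* Log-convexity of P *)

(* sinh s >= s for s >= 0, via the derivative 2 (cosh s - 1) >= 0. *)
Lemma sinh_ge_id s : 0 <= s -> 2 * s <= exp s - exp (- s).
Proof.
  intro hs.
  assert (hmono := nondecreasing_of_derive
    (fun s => exp s - exp (- s) - 2 * s) (fun s => exp s + exp (- s) - 2)).
  enough (exp 0 - exp (- 0) - 2 * 0 <= exp s - exp (- s) - 2 * s)
    by (rewrite Ropp_0, exp_0 in *; lra).
  apply hmono; [intro t; auto_derive; [exact I | ring] | intro t | exact hs].
  pose proof (exp_mul_exp_opp t) as hinv; pose proof (exp_pos t) as hpos.
  assert (hsq : exp t * (exp t + exp (- t) - 2) = (exp t - 1) ^ 2)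
    by (rewrite Rmult_minus_distr_l, Rmult_plus_distr_l, hinv; ring).
  pose proof (pow2_ge_0 (exp t - 1)); nra.
Qed.

(* (e^v - 1)^2 >= v^2 e^v: with E = e^{v/2}, F = e^{-v/2} the difference is
   E^2 ((E - F)^2 - v^2), and |E - F| >= |v| by [sinh_ge_id]. *)
Lemma exp_sub_one_sq_ge v : v ^ 2 * exp v <= (exp v - 1) ^ 2.
Proof.
  set (s := v / 2). set (E := exp s). set (F := exp (- s)).
  assert (hEF : E * F = 1) by apply exp_mul_exp_opp.
  assert (hv : exp v = E * E) by (unfold E, s; rewrite <- exp_plus; f_equal; field).
  rewrite hv. replace v with (2 * s) by (unfold s; field).
  enough (0 <= E * E * ((E - F - 2 * s) * (E - F + 2 * s))).
  { replace (E * E - 1) with (E * (E - F)) by (rewrite <- hEF; ring). nra. }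
  apply Rmult_le_pos; [nra|].
  destruct (Rle_or_lt 0 s) as [hs|hs].
  - pose proof (sinh_ge_id s hs) as hsinh; fold E F in hsinh; nra.
  - pose proof (sinh_ge_id (- s) ltac:(lra)) as hsinh.
    rewrite Ropp_involutive in hsinh; fold E F in hsinh; nra.
Qed.

(* P'^2 <= P'' P; for v <> 0 the difference is ((e^v-1)^2 - v^2 e^v)/v^4. *)
Lemma P_log_convex_ineq v : P1 v * P1 v <= P2 v * P v.
Proof.
  destruct (Req_dec v 0) as [->|hv]; [rewrite P1_0, P2_0, P_0; lra|].
  rewrite P1_closed_form, P2_closed_form, P_closed_form by exact hv.
  assert (e : Pc2 v * ((exp v - 1) / v) - Pc1 v * Pc1 v
              = ((exp v - 1) ^ 2 - v ^ 2 * exp v) / (v ^ 2) ^ 2)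
    by (unfold Pc1, Pc2; field; exact hv).
  enough (0 <= ((exp v - 1) ^ 2 - v ^ 2 * exp v) / (v ^ 2) ^ 2) by lra.
  apply Rdiv_le_0_compat; [pose proof (exp_sub_one_sq_ge v); lra|].
  apply pow_lt, pow2_gt_0, hv.
Qed.

(* ln P is convex: its derivative P'/P has derivative (P'' P - P'^2)/P^2 >= 0. *)
Lemma ln_P_convex : convex_fun (fun v => ln (P v)).
Proof.
  apply (convex_of_nondecreasing_derive _ (fun v => P1 v / P v)).
  - intro v; apply (is_derive_comp ln P v (/ P v) (P1 v));
      [apply is_derive_ln, P_pos | apply P_is_derive].
  - apply (nondecreasing_of_derive _ (fun v => (P2 v * P v - P1 v * P1 v) / P v ^ 2)).
    + intro v; apply is_derive_div;
        [apply P1_is_derive | apply P_is_derive | apply Rgt_not_eq, P_pos].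
    + intro v; apply Rdiv_le_0_compat; [pose proof (P_log_convex_ineq v); lra|].
      apply pow_lt, P_pos.
Qed.

Section fdef_properties.

Variables mu a lam : R.
Hypothesis ha : 1 < a.
Hypothesis hlam : 0 < lam.

Lemma fdef_eq_ln_P z :
  fdef mu a lam z = mu * z + lam * ln a + lam * ln (P (a / lam * (1 - z))).
Proof.
  rewrite fdef_eq_P by lra. rewrite ln_mult by (lra || apply P_pos). ring.
Qed.

(* Part (1), smoothness: f is built from constants, id, +, *, ln and P. *)
Lemma fdef_derivable_n n : derivable_n n (fdef mu a lam).
Proof.
  replace (fdef mu a lam) with (fun z => (mu * z + lam * ln a) +
      lam * ln (P (a / lam + (- (a / lam)) * z)))
    by (apply functional_extensionality; intro z; rewrite fdef_eq_ln_P;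
        do 4 f_equal; ring).
  apply derivable_n_plus;
    [apply derivable_n_plus; apply derivable_n_mult | apply derivable_n_mult];
    try apply derivable_n_const; try apply derivable_n_id.
  apply derivable_n_ln; [intro; apply P_pos|].
  apply (derivable_n_comp n P); [apply derivable_n_PSeries, P_radius|].
  apply derivable_n_plus; [apply derivable_n_const|].
  apply derivable_n_mult; [apply derivable_n_const | apply derivable_n_id].
Qed.

(* f is an affine function plus lam times ln P composed with an affine map. *)
Lemma fdef_convex : convex_fun (fdef mu a lam).
Proof.
  intros x y t ht. rewrite !fdef_eq_ln_P.
  replace (a / lam * (1 - (t * x + (1 - t) * y))) with
    (t * (a / lam * (1 - x)) + (1 - t) * (a / lam * (1 - y))) by ring.
  pose proof (ln_P_convex (a / lam * (1 - x)) (a / lam * (1 - y)) t ht) as hP.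
  pose proof (Rmult_le_compat_l lam _ _ (Rlt_le _ _ hlam) hP). nra.
Qed.

(* P(-a) = (1 - e^{-a})/a < 1/a < 1 = P(0), so P takes the value 1/a on (-a, 0). *)
Lemma P_reaches_inv : exists v, - a < v < 0 /\ P v = 1 / a.
Proof.
  assert (hcont : continuity P).
  { intro t; apply continuity_pt_filterlim.
    apply (ex_derive_continuous (K := R_AbsRing) (V := R_NormedModule)).
    eexists; apply P_is_derive. }
  assert (hlow : P (- a) < 1 / a).
  { rewrite P_closed_form by lra. pose proof (exp_pos (- a)).
    replace ((exp (- a) - 1) / - a) with ((1 - exp (- a)) / a) by (field; lra).
    apply Rmult_lt_compat_r; [apply Rinv_0_lt_compat|]; lra. }
  assert (hhigh : 1 / a < P 0).
  { rewrite P_0; apply (Rmult_lt_reg_l a); [lra|]; field_simplify; lra. }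
  destruct (IVT_gen P (- a) 0 (1 / a) hcont) as [v [hv ev]];
    rewrite Rmin_left, Rmax_right in * by lra; [lra|].
  exists v; split; [|exact ev].
  split; apply Rnot_le_lt; intro; assert (v = - a \/ v = 0) as [->| ->] by lra; lra.
Qed.

Lemma fdef_fixed_iff x : fdef mu a lam x = mu * x <-> P (a / lam * (1 - x)) = 1 / a.
Proof.
  rewrite fdef_eq_P by lra.
  assert (hpos : 0 < a * P (a / lam * (1 - x))) by (apply Rmult_lt_0_compat; [lra | apply P_pos]).
  split.
  - intro e. assert (hln : ln (a * P (a / lam * (1 - x))) = 0)
      by (apply (Rmult_eq_reg_l lam); lra).
    assert (hone : a * P (a / lam * (1 - x)) = 1)
      by (rewrite <- (exp_ln _ hpos), hln; apply exp_0).
    apply (Rmult_eq_reg_l a); [rewrite hone; field |]; lra.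
  - intro e. rewrite e. replace (a * (1 / a)) with 1 by (field; lra).
    rewrite ln_1; ring.
Qed.

End fdef_properties.

Theorem proposition3p1 (mu a lam : R) (ha : 1 < a) (hlam : 0 < lam) :
  (forall z : R, ex_series (wterm a lam z) /\
     fdef mu a lam z = mu * z + lam * ln (w a lam z)) /\
  (forall (n : nat) (z : R), ex_derive_n (fdef mu a lam) n z) /\
  convex_fun (fdef mu a lam) /\
  (exists H : R, (forall x : R, fdef mu a lam x = mu * x <-> x = H) /\
     1 < H < 1 + lam).
Proof.
  split; [|split; [|split]].
  - intro z. destruct (w_eq_P a lam z hlam) as [hex hw].
    split; [exact hex|]. rewrite hw. apply fdef_eq_P; lra.
  - intros n z. apply derivable_n_ex_derive_n, fdef_derivable_n; assumption.
  - apply fdef_convex; assumption.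
  - destruct (P_reaches_inv a ha) as [v [hv ev]].
    exists (1 - lam * v / a). split.
    + intro x. rewrite fdef_fixed_iff by assumption. rewrite <- ev. split.
      * intro e. apply P_injective in e.
        replace x with (1 - lam / a * (a / lam * (1 - x))) by (field; lra).
        rewrite e; field; lra.
      * intros ->. f_equal; field; lra.
    + split; apply (Rmult_lt_reg_l a); try lra; field_simplify; nra.
Qed.
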